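(* Let $\mathscr H_1,\dots,\mathscr H_N$ be null hypotheses with associated random ''p-values'' $p_1,\dots,p_N$; call $p_l$ null if $\mathscr H_l$ is true. Assume the null p-values are i.i.d., satisfy $\Pr(p_l\le u)\le u$ for all $u\in[0,1]$, and are independent of the non-null p-values. Fix $q\in(0,1]$ and $\mathcal K\subset\{1,\dots,N\}$. Define $$\hat k=\max\Big\{k\in\mathcal K:\frac{\#\{l\le k:p_l>1/2\}}{\#\{l\le k:p_l\le 1/2\}\vee1}\le q\Big\},\qquad \hat k_+=\max\Big\{k\in\mathcal K:\frac{1+\#\{l\le k:p_l>1/2\}}{\#\{l\le k:p_l\le 1/2\}\vee1}\le q\Big\},$$ with $\hat k=0$ (resp. $\hat k_+=0$) if the set is empty, and reject $\mathscr H_k$ for all $k\le\hat k$ (resp. $k\le \hat k_+$) with $p_k\le1/2$. Let $V=\#\{l\le\hat k: p_l\text{ null},\ p_l\le1/2\}$, $R=\#\{l\le\hat k:p_l\le1/2\}$, $V_+=\#\{l\le\hat k_+: p_l\text{ null},\ p_l\le1/2\}$, $R_+=\#\{l\le\hat k_+:p_l\le1/2\}$ (all zero when the corresponding $\hat k$ or $\hat k_+$ is $0$). Then $$\mathbb E\Big[\frac{V}{R+q^{-1}}\Big]\le q\qquad\text{and}\qquad \mathbb E\Big[\frac{V_+}{R_+\vee1}\Big]\le q.$$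
   Context: Indices $l\le k$ range over $\{1,\dots,k\}$; $a\vee b=\max\{a,b\}$. *)

From Stdlib Require Import Reals Bool.
Open Scope R_scope.

Record ProbSpace := {
  Omega :> Type;
  ev : (Omega -> Prop) -> Prop;
  Pr : (Omega -> Prop) -> R;
  ev_ext : forall A B, (forall w, A w <-> B w) -> ev A -> ev B;
  ev_full : ev (fun _ => True);
  ev_compl : forall A, ev A -> ev (fun w => ~ A w);
  ev_cunion : forall A : nat -> Omega -> Prop,
      (forall n, ev (A n)) -> ev (fun w => exists n, A n w);
  Pr_ext : forall A B, (forall w, A w <-> B w) -> Pr A = Pr B;
  Pr_nonneg : forall A, ev A -> 0 <= Pr A;
  Pr_full : Pr (fun _ => True) = 1;
  Pr_sigma_add : forall A : nat -> Omega -> Prop,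
      (forall n, ev (A n)) ->
      (forall n m, n <> m -> forall w, A n w -> A m w -> False) ->
      infinite_sum (fun n => Pr (A n)) (Pr (fun w => exists n, A n w))
}.

Fixpoint prod1 (n : nat) (f : nat -> R) : R :=
  match n with O => 1 | S m => prod1 m f * f (S m) end.

Fixpoint cnt (P : nat -> bool) (k : nat) : nat :=
  match k with O => O | S m => (cnt P m + (if P (S m) then 1 else 0))%nat end.

Fixpoint max_upto (cond : nat -> bool) (n : nat) : nat :=
  match n with O => O | S m => if cond (S m) then S m else max_upto cond m end.

Definition Rleb (x y : R) : bool := if Rle_dec x y then true else false.

Section Procedure.
Variable Om : Type.
Variable p : nat -> Om -> R.

Definition small (w : Om) (l : nat) : bool := Rleb (p l w) (1/2).
Definition big (w : Om) (l : nat) : bool := negb (small w l).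

(* c = 0 gives \hat k, c = 1 gives \hat k_+ *)
Definition khat_gen (c : nat) (N : nat) (K : nat -> bool) (q : R) (w : Om) : nat :=
  max_upto (fun k => K k &&
     Rleb ((INR c + INR (cnt (big w) k)) / INR (Nat.max (cnt (small w) k) 1)) q) N.

Definition Rcount (kh : nat) (w : Om) : nat := cnt (small w) kh.
Definition Vcount (null : nat -> bool) (kh : nat) (w : Om) : nat :=
  cnt (fun l => null l && small w l) kh.
End Procedure.

(* Expectation of f(V,R) for nat-valued random variables V, R with values in
   {0..N}: sum over all values of f v r * Pr(V = v /\ R = r). *)
Definition expect2 (Pspace : ProbSpace) (N : nat) (f : nat -> nat -> R)
    (V Rr : Pspace -> nat) : R :=
  sum_f_R0 (fun v => sum_f_R0 (fun r =>
      f v r * Pr Pspace (fun w => V w = v /\ Rr w = r)) N) N.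

(* Null p-values (indices 1..N with null l = true) are mutually independent
   and independent of the vector of non-null p-values: the joint CDF on any
   subset S of indices factorises. *)
Definition nulls_indep (Ps : ProbSpace) (N : nat) (null : nat -> bool)
    (p : nat -> Ps -> R) : Prop :=
  forall (S : nat -> bool) (u : nat -> R),
    Pr Ps (fun w => forall l, (1 <= l <= N)%nat -> S l = true -> p l w <= u l)
    = prod1 N (fun l => if S l && null l
                        then Pr Ps (fun w => p l w <= u l) else 1)
      * Pr Ps (fun w => forall l, (1 <= l <= N)%nat -> S l = true ->
                          null l = false -> p l w <= u l).

Definition nulls_ident (Ps : ProbSpace) (N : nat) (null : nat -> bool)
    (p : nat -> Ps -> R) : Prop :=
  forall l l', (1 <= l <= N)%nat -> (1 <= l' <= N)%nat ->
    null l = true -> null l' = true ->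
    forall u, Pr Ps (fun w => p l w <= u) = Pr Ps (fun w => p l' w <= u).

Definition nulls_superunif (Ps : ProbSpace) (N : nat) (null : nat -> bool)
    (p : nat -> Ps -> R) : Prop :=
  forall l, (1 <= l <= N)%nat -> null l = true ->
    forall u, 0 <= u <= 1 -> Pr Ps (fun w => p l w <= u) <= u.

(** Write X_l = 1{p_l <= 1/2}.  Both procedures only look at X, and the
    rejection index \hat k (resp. \hat k_+) is the largest accepted k, a
    "stopping index" determined by the running counts of ones and zeros of X.

    1. Combinatorial optional stopping (the heart of the proof).  If the
       marked (null) coordinates of a boolean vector are i.i.d. Bernoulli(rho)
       with rho <= 1/2, then for ANY such stopping index τ the mean of
       M_τ = (#null ones <= τ) / (1 + #null zeros <= τ) is at most 1
       ([ratio_mean_le_1]).  We group configurations by their number s of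
       null ones: a class contributes at most C(m, s-1) ([stop_bound], by
       induction on the length), and the Bernoulli weights turn this into a
       sum dominated by the binomial identity Σ_s ρ^s(1-ρ)^(m-s) C(m,s) = 1.
    2. Pointwise, at an accepted index, V/(R+1/q) <= q M and
       V/(R∨1) <= q M ([khat_term_le_ratio], [khat_plus_term_le_ratio]).
    3. Probability: the law of X is computed by the law of total probability
       over configurations, and independence gives the product formula
       P(X = z) = Π_{null l} ρ^{z_l}(1-ρ)^{1-z_l} · P(X = z on non-nulls)
       ([config_law]).  Summing first over the null coordinates
       ([sum_var_fubini]) and applying 1. and 2. yields both bounds. *)

From Stdlib Require Import Reals Lra Lia Bool FunctionalExtensionality Classical.
Open Scope R_scope.

Fixpoint binom (n k : nat) : nat :=
  match n, k with
  | _, O => 1%nat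
  | O, S _ => 0%nat
  | S n', S k' => (binom n' k' + binom n' (S k'))%nat
  end.

Lemma binom_gt n k : (n < k)%nat -> binom n k = 0%nat.
Proof.
  revert k; induction n as [|n IH]; intros [|k] Hk; simpl; try lia; auto.
  rewrite !IH by lia. reflexivity.
Qed.

Lemma binom_n0 n : binom n 0 = 1%nat.
Proof. now destruct n. Qed.

Lemma binom_absorb n k : (binom n (S k) * S k = binom n k * (n - k))%nat.
Proof.
  revert k; induction n as [|n IH]; intros k; [simpl; lia|].
  destruct k as [|k].
  - specialize (IH 0%nat). cbn [binom]. rewrite binom_n0 in *. lia.
  - cbn [binom]. pose proof (IH (S k)) as H1. pose proof (IH k) as H2.
    destruct (Nat.le_gt_cases (S k) n) as [Hle|Hgt].
    + replace (S n - S k)%nat with (n - k)%nat by lia. nia.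
    + rewrite (binom_gt n (S k)), (binom_gt n (S (S k))) in * by lia. lia.
Qed.

(** [binom_pred m s] is C(m, s-1), and 0 for s = 0: the optional-stopping
    bound for one class of configurations. *)
Definition binom_pred (m s : nat) : R :=
  match s with O => 0 | S s' => INR (binom m s') end.

Lemma binom_pred_pascal m s :
  binom_pred m s + binom_pred m (S s) = binom_pred (S m) (S s).
Proof.
  destruct s; simpl; [rewrite !binom_n0; simpl; ring|]. rewrite plus_INR. ring.
Qed.

(** Stopping with s ones among m marked coordinates contributes
    C(m,s) * s/(1+m-s) = C(m,s-1). *)
Lemma stopped_class_value m s :
  INR s / (1 + INR (m - s)) * INR (binom m s) <= binom_pred m s.
Proof.
  destruct s as [|s]; simpl binom_pred.
  - simpl. unfold Rdiv. rewrite !Rmult_0_l. lra.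
  - destruct (Nat.le_gt_cases (S s) m) as [Hle|Hgt].
    + pose proof (binom_absorb m s) as Habs. apply (f_equal INR) in Habs.
      rewrite !mult_INR in Habs.
      replace (1 + INR (m - S s)) with (INR (m - s))
        by (replace (m - s)%nat with (S (m - S s)) by lia; rewrite S_INR; ring).
      assert (INR (m - s) <> 0) by (apply not_0_INR; lia).
      right. apply (Rmult_eq_reg_r (INR (m - s))); auto.
      rewrite <- Habs. field. auto.
    + rewrite binom_gt by lia. simpl. rewrite Rmult_0_r. apply pos_INR.
Qed.

Lemma cnt_ext P Q k :
  (forall l, (1 <= l <= k)%nat -> P l = Q l) -> cnt P k = cnt Q k.
Proof.
  induction k as [|k IH]; intros H; simpl; auto.
  rewrite IH by (intros; apply H; lia). rewrite H by lia. reflexivity.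
Qed.

Lemma cnt_le P k : (cnt P k <= k)%nat.
Proof. induction k; simpl; auto. destruct (P (S k)); lia. Qed.

Lemma cnt_mono P Q k : (forall l, P l = true -> Q l = true) -> (cnt P k <= cnt Q k)%nat.
Proof.
  intros H; induction k as [|k IH]; simpl; auto.
  destruct (P (S k)) eqn:E; [rewrite (H _ E); lia|]. destruct (Q (S k)); lia.
Qed.

Lemma cnt_split P Q k :
  cnt P k = (cnt (fun l => P l && Q l) k + cnt (fun l => P l && negb (Q l)) k)%nat.
Proof. induction k; simpl; auto. destruct (P (S k)), (Q (S k)); simpl; lia. Qed.

Lemma cnt_compl P k : (cnt P k + cnt (fun l => negb (P l)) k = k)%nat.
Proof. induction k; simpl; auto. destruct (P (S k)); simpl; lia. Qed.

Lemma max_upto_le c n : (max_upto c n <= n)%nat.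
Proof. induction n; simpl; auto. destruct (c (S n)); lia. Qed.

Lemma max_upto_spec c n : max_upto c n = 0%nat \/ c (max_upto c n) = true.
Proof. induction n; simpl; auto. destruct (c (S n)) eqn:E; auto. Qed.

Lemma max_upto_ext c d n :
  (forall k, (1 <= k <= n)%nat -> c k = d k) -> max_upto c n = max_upto d n.
Proof.
  induction n as [|n IH]; intros H; simpl; auto.
  rewrite IH by (intros; apply H; lia). rewrite H by lia. reflexivity.
Qed.

Lemma prod1_ext n f g :
  (forall l, (1 <= l <= n)%nat -> f l = g l) -> prod1 n f = prod1 n g.
Proof.
  induction n as [|n IH]; intros H; simpl; auto.
  rewrite IH by (intros; apply H; lia). rewrite H by lia. reflexivity.
Qed.

Lemma prod1_update n f g j c :
  (1 <= j <= n)%nat -> (forall l, l <> j -> f l = g l) -> g j = c * f j ->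
  prod1 n g = c * prod1 n f.
Proof.
  revert f g; induction n as [|n IH]; intros f g Hj Hfg Hg; [lia|]. simpl.
  destruct (Nat.eq_dec j (S n)) as [->|Hne].
  - rewrite (prod1_ext n g f) by (intros; symmetry; apply Hfg; lia). rewrite Hg. ring.
  - rewrite (IH f g), (Hfg (S n)) by (auto; lia). ring.
Qed.

Lemma prod1_nonneg n f : (forall l, 0 <= f l) -> 0 <= prod1 n f.
Proof. induction n; intros H; simpl; [lra|]. apply Rmult_le_pos; auto. Qed.

Lemma sum_indicator n a g : (a <= n)%nat ->
  sum_f_R0 (fun i => if Nat.eqb a i then g i else 0) n = g a.
Proof.
  intros Ha. induction n as [|n IH]; cbn [sum_f_R0].
  - replace a with 0%nat by lia. reflexivity.
  - destruct (Nat.eq_dec a (S n)) as [->|Hne].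
    + rewrite Nat.eqb_refl, (sum_eq _ (fun _ => 0)), sum_cte by
        (intros i Hi; replace (Nat.eqb (S n) i) with false by (symmetry; apply Nat.eqb_neq; lia);
         reflexivity).
      ring.
    + rewrite IH by lia. replace (Nat.eqb a (S n)) with false by (symmetry; apply Nat.eqb_neq; lia).
      ring.
Qed.
Definition upd (x : nat -> bool) (k : nat) (b : bool) : nat -> bool :=
  fun l => if Nat.eqb l k then b else x l.

Lemma upd_comm x i j a b : i <> j -> upd (upd x i a) j b = upd (upd x j b) i a.
Proof.
  intros Hij. extensionality l. unfold upd.
  destruct (Nat.eqb_spec l j), (Nat.eqb_spec l i); subst; congruence.
Qed.

(** [sum_var T n F x] sums [F] over the vectors obtained from [x] by freely
    changing its coordinates in T ∩ {1..n}. *)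
Fixpoint sum_var (T : nat -> bool) (n : nat) (F : (nat -> bool) -> R)
    (x : nat -> bool) : R :=
  match n with
  | O => F x
  | S m => if T (S m)
           then sum_var T m F (upd x (S m) true) + sum_var T m F (upd x (S m) false)
           else sum_var T m F x
  end.

(** [variant T n x z]: [z] differs from [x] only inside T ∩ {1..n}; these are
    the vectors [sum_var T n _ x] ranges over. *)
Definition variant (T : nat -> bool) (n : nat) (x z : nat -> bool) : Prop :=
  forall l, z l <> x l -> T l = true /\ (1 <= l <= n)%nat.

Lemma variant_refl T n x : variant T n x x.
Proof. intros l H. congruence. Qed.

Lemma variant_upd T n x b z :
  T (S n) = true -> variant T n (upd x (S n) b) z -> variant T (S n) x z.
Proof.
  intros HT H l Hl. specialize (H l). unfold upd in H; cbv beta in H.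
  
  destruct (Nat.eqb_spec l (S n)) as [Heq|Hne]; [subst; split; auto; lia|].
  destruct (H Hl). split; auto; lia.
Qed.

Lemma variant_skip T n x z : T (S n) = false -> variant T n x z -> variant T (S n) x z.
Proof. intros HT H l Hl. destruct (H l Hl). split; auto; lia. Qed.

Lemma variant_upd_val T n x b z : variant T n (upd x (S n) b) z -> z (S n) = b.
Proof.
  intros H. destruct (Bool.bool_dec (z (S n)) b) as [|Hne]; auto.
  specialize (H (S n)). unfold upd in H; cbv beta in H. rewrite Nat.eqb_refl in H.
  destruct (H Hne). lia.
Qed.

Lemma variant_eq T n x z l :
  variant T n x z -> T l = false \/ ~ (1 <= l <= n)%nat -> z l = x l.
Proof.
  intros H Hl. destruct (Bool.bool_dec (z l) (x l)) as [|Hne]; auto.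
  destruct (H l Hne). destruct Hl; [congruence|tauto].
Qed.

Lemma sum_var_le T n F G x :
  (forall z, variant T n x z -> F z <= G z) -> sum_var T n F x <= sum_var T n G x.
Proof.
  revert x; induction n as [|n IH]; intros x H; simpl; [apply H, variant_refl|].
  destruct (T (S n)) eqn:HT.
  - apply Rplus_le_compat; apply IH; intros z Hz; apply H; eapply variant_upd; eauto.
  - apply IH. intros z Hz; apply H, variant_skip; auto.
Qed.

Lemma sum_var_ext T n F G x :
  (forall z, variant T n x z -> F z = G z) -> sum_var T n F x = sum_var T n G x.
Proof.
  intros H. apply Rle_antisym; apply sum_var_le; intros z Hz; rewrite H; auto; lra.
Qed.

Lemma sum_var_plus T n F G x :
  sum_var T n (fun z => F z + G z) x = sum_var T n F x + sum_var T n G x.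
Proof.
  revert x; induction n as [|n IH]; intros x; simpl; auto.
  destruct (T (S n)); rewrite ?IH; ring.
Qed.

Lemma sum_var_scal T n c F x :
  sum_var T n (fun z => c * F z) x = c * sum_var T n F x.
Proof.
  revert x; induction n as [|n IH]; intros x; simpl; auto.
  destruct (T (S n)); rewrite ?IH; ring.
Qed.

Lemma sum_var_sum T n F k x :
  sum_var T n (fun z => sum_f_R0 (fun i => F i z) k) x
  = sum_f_R0 (fun i => sum_var T n (F i) x) k.
Proof.
  induction k as [|k IH]; cbn [sum_f_R0]; auto. rewrite sum_var_plus, IH. reflexivity.
Qed.

Lemma sum_var_upd T n F x k b : (n < k)%nat ->
  sum_var T n (fun y => F (upd y k b)) x = sum_var T n F (upd x k b).
Proof.
  revert x; induction n as [|n IH]; intros x Hk; simpl; auto.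
  destruct (T (S n)); rewrite ?IH by lia; auto.
  rewrite !(upd_comm x k (S n)) by lia. reflexivity.
Qed.

Lemma sum_var_fubini T n F x :
  sum_var (fun _ => true) n F x
  = sum_var (fun l => negb (T l)) n (sum_var T n F) x.
Proof.
  revert x; induction n as [|n IH]; intros x; [reflexivity|]. cbn [sum_var].
  rewrite !IH. destruct (T (S n)); simpl negb; cbn iota.
  - rewrite <- !(sum_var_upd _ n (sum_var T n F) x (S n)) by lia.
    rewrite <- sum_var_plus. reflexivity.
  - reflexivity.
Qed.

Definition ones (T z : nat -> bool) (k : nat) : nat := cnt (fun l => T l && z l) k.
Definition zeros (T z : nat -> bool) (k : nat) : nat :=
  cnt (fun l => T l && negb (z l)) k.
Definition ratio (T : nat -> bool) (k : nat) (z : nat -> bool) : R :=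
  INR (ones T z k) / (1 + INR (zeros T z k)).

Definition stop_index (rule : nat -> nat -> nat -> bool) (n : nat)
    (z : nat -> bool) : nat :=
  max_upto (fun k => rule k (cnt z k) (cnt (fun l => negb (z l)) k)) n.

Definition weight (T : nat -> bool) (rho : R) (z : nat -> bool) (l : nat) : R :=
  if T l then (if z l then rho else 1 - rho) else 1.

Lemma ratio_nonneg T k z : 0 <= ratio T k z.
Proof.
  unfold ratio. pose proof (pos_INR (ones T z k)). pose proof (pos_INR (zeros T z k)).
  apply Rmult_le_pos; auto. left. apply Rinv_0_lt_compat. lra.
Qed.

Lemma ones_zeros T z k : cnt T k = (ones T z k + zeros T z k)%nat.
Proof. apply cnt_split. Qed.

Section Stopping.
Variable T : nat -> bool.
Variable rule : nat -> nat -> nat -> bool.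

Definition class_sum (n s : nat) (G : (nat -> bool) -> R) (x : nat -> bool) : R :=
  sum_var T n (fun z => if Nat.eqb (ones T z n) s then G z else 0) x.

Lemma class_sum_ext n s G H x :
  (forall z, variant T n x z -> ones T z n = s -> G z = H z) ->
  class_sum n s G x = class_sum n s H x.
Proof.
  intros E. apply sum_var_ext. intros z Hz.
  destruct (Nat.eqb_spec (ones T z n) s); auto.
Qed.

Lemma class_sum_scal n s c G x :
  class_sum n s (fun z => c * G z) x = c * class_sum n s G x.
Proof.
  unfold class_sum. rewrite <- sum_var_scal. apply sum_var_ext. intros z _.
  destruct (Nat.eqb (ones T z n) s); ring.
Qed.

Lemma class_sum_marked n s G x : T (S n) = true ->
  class_sum (S n) (S s) G x
  = class_sum n s G (upd x (S n) true) + class_sum n (S s) G (upd x (S n) false).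
Proof.
  intros HT. unfold class_sum. cbn [sum_var]. rewrite HT.
  f_equal; apply sum_var_ext; intros z Hz;
    unfold ones; cbn [cnt]; rewrite HT, (variant_upd_val _ _ _ _ _ Hz); simpl;
    rewrite ?Nat.add_1_r, ?Nat.add_0_r; reflexivity.
Qed.

Lemma class_sum_marked0 n G x : T (S n) = true ->
  class_sum (S n) 0 G x = class_sum n 0 G (upd x (S n) false).
Proof.
  intros HT. unfold class_sum. cbn [sum_var]. rewrite HT.
  rewrite (sum_var_ext _ _ _ (fun _ => 0 * 0)), sum_var_scal, Rmult_0_l, Rplus_0_l.
  - apply sum_var_ext; intros z Hz.
    unfold ones; cbn [cnt]; rewrite HT, (variant_upd_val _ _ _ _ _ Hz); simpl.
    rewrite Nat.add_0_r. reflexivity.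
  - intros z Hz. unfold ones; cbn [cnt]; rewrite HT, (variant_upd_val _ _ _ _ _ Hz); simpl.
    rewrite Nat.add_1_r. simpl. ring.
Qed.

Lemma class_sum_unmarked n s G x : T (S n) = false ->
  class_sum (S n) s G x = class_sum n s G x.
Proof.
  intros HT. unfold class_sum. cbn [sum_var]. rewrite HT.
  apply sum_var_ext; intros z Hz. unfold ones; cbn [cnt]; rewrite HT; simpl.
  rewrite Nat.add_0_r. reflexivity.
Qed.

Lemma class_count n s x : class_sum n s (fun _ => 1) x = INR (binom (cnt T n) s).
Proof.
  revert s x; induction n as [|n IH]; intros s x.
  - unfold class_sum. simpl. destruct s; reflexivity.
  - cbn [cnt]. destruct (T (S n)) eqn:HT.
    + rewrite Nat.add_1_r. destruct s as [|s].
      * rewrite class_sum_marked0, IH, !binom_n0 by auto. reflexivity.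
      * rewrite class_sum_marked, !IH by auto. cbn [binom]. rewrite plus_INR. reflexivity.
    + rewrite class_sum_unmarked, IH, Nat.add_0_r by auto. reflexivity.
Qed.

(** On a class, the total counts of ones and zeros up to [n] are determined,
    hence so is the decision of [rule] at [n]. *)
Lemma rule_on_class n s x z : variant T n x z -> ones T z n = s ->
  rule n (cnt z n) (cnt (fun l => negb (z l)) n)
  = rule n (s + cnt (fun l => negb (T l) && x l) n)
           (n - (s + cnt (fun l => negb (T l) && x l) n)).
Proof.
  intros Hz Hs. set (e := cnt (fun l => negb (T l) && x l) n).
  assert (Hones : cnt z n = (s + e)%nat).
  { rewrite (cnt_split z T), <- Hs. unfold ones, e. f_equal.
    - apply cnt_ext. intros. apply andb_comm.
    - apply cnt_ext. intros l Hl. destruct (T l) eqn:E; simpl.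
      + apply andb_false_r.
      + rewrite andb_true_r. apply (variant_eq T n x z l Hz). auto. }
  pose proof (cnt_compl z n). f_equal; lia.
Qed.

Lemma stop_bound n s x :
  class_sum n s (fun z => ratio T (stop_index rule n z) z) x <= binom_pred (cnt T n) s.
Proof.
  revert s x; induction n as [|n IH]; intros s x.
  - unfold class_sum, ratio, ones, zeros. simpl.
    replace (0 / (1 + 0)) with 0 by (unfold Rdiv; ring).
    destruct s; simpl; [lra|]. destruct (Nat.eqb 0 (S s)); [apply pos_INR|apply pos_INR].
  - set (e := cnt (fun l => negb (T l) && x l) (S n)).
    destruct (rule (S n) (s + e) (S n - (s + e))) eqn:Hstop.
    + (* every configuration of the class stops at n+1 *)
      rewrite (class_sum_ext _ _ _ (fun _ => INR s / (1 + INR (cnt T (S n) - s)) * 1)).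
      * rewrite class_sum_scal, class_count. apply stopped_class_value.
      * intros z Hz Hs. unfold stop_index. cbn [max_upto].
        rewrite (rule_on_class _ _ _ _ Hz Hs); fold e; rewrite Hstop. unfold ratio. rewrite Hs.
        rewrite (ones_zeros T z (S n)), Hs. replace (s + zeros T z (S n) - s)%nat
          with (zeros T z (S n)) by lia. ring.
    + (* no configuration stops at n+1: recurse on the value of coordinate n+1 *)
      rewrite (class_sum_ext _ _ _ (fun z => ratio T (stop_index rule n z) z)).
      2:{ intros z Hz Hs. unfold stop_index at 1. cbn [max_upto].
          rewrite (rule_on_class _ _ _ _ Hz Hs); fold e; rewrite Hstop. reflexivity. }
      cbn [cnt]. destruct (T (S n)) eqn:HT.
      * rewrite Nat.add_1_r. destruct s as [|s].
        -- rewrite class_sum_marked0 by auto. apply (IH 0%nat).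
        -- rewrite class_sum_marked, <- binom_pred_pascal by auto.
           apply Rplus_le_compat; apply IH.
      * rewrite class_sum_unmarked, Nat.add_0_r by auto. apply IH.
Qed.

Lemma weight_on_class rho z n :
  prod1 n (weight T rho z) = rho ^ (ones T z n) * (1 - rho) ^ (cnt T n - ones T z n).
Proof.
  rewrite (ones_zeros T z n), Nat.add_sub_swap, Nat.sub_diag by lia. simpl.
  induction n as [|n IH]; simpl; [ring|]. rewrite IH. unfold weight, ones, zeros. simpl.
  destruct (T (S n)), (z (S n)); simpl; rewrite ?Nat.add_0_r, ?Nat.add_1_r; simpl; ring.
Qed.

Lemma total_mass rho n x : sum_var T n (fun z => prod1 n (weight T rho z)) x = 1.
Proof.
  revert x; induction n as [|n IH]; intros x; simpl; [reflexivity|].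
  destruct (T (S n)) eqn:HT.
  - rewrite (sum_var_ext _ _ _ (fun z => rho * prod1 n (weight T rho z))).
    2:{ intros z Hz. unfold weight at 2. rewrite HT, (variant_upd_val _ _ _ _ _ Hz). ring. }
    rewrite (sum_var_ext _ _ _ (fun z => (1 - rho) * prod1 n (weight T rho z))
               (upd x (S n) false)).
    2:{ intros z Hz. unfold weight at 2. rewrite HT, (variant_upd_val _ _ _ _ _ Hz). ring. }
    rewrite !sum_var_scal, !IH. ring.
  - rewrite <- (IH x). apply sum_var_ext. intros z _. unfold weight at 2. rewrite HT. ring.
Qed.

Lemma class_decomp n G x : sum_var T n G x = sum_f_R0 (fun s => class_sum n s G x) n.
Proof.
  unfold class_sum. rewrite <- sum_var_sum. apply sum_var_ext. intros z _.
  rewrite (sum_indicator n (ones T z n) (fun _ => G z)); auto. apply cnt_le.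
Qed.
End Stopping.

(** For rho <= 1/2 the weights w_s = rho^s (1-rho)^(m-s) decrease along the
    support of C(m,.), so shifting the binomial row by one lowers the sum. *)
Lemma weighted_binom_shift rho m n : 0 <= rho <= 1/2 ->
  let w s := rho ^ s * (1 - rho) ^ (m - s) in
  sum_f_R0 (fun s => w s * binom_pred m s) n <= sum_f_R0 (fun s => w s * INR (binom m s)) n.
Proof.
  intros Hr w.
  assert (Hw : forall s, 0 <= w s) by (intros; apply Rmult_le_pos; apply pow_le; lra).
  assert (Hstep : forall s, w (S s) * INR (binom m s) <= w s * INR (binom m s)).
  { intros s. apply Rmult_le_compat_r; [apply pos_INR|].
    destruct (Nat.lt_ge_cases s m) as [Hlt|Hge].
    - unfold w. replace (m - s)%nat with (S (m - S s)) by lia. simpl.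
      pose proof (pow_le rho s (proj1 Hr)). pose proof (pow_le (1 - rho) (m - S s) ltac:(lra)).
      assert (0 <= rho ^ s * (1 - rho) ^ (m - S s)) by (apply Rmult_le_pos; auto). nra.
    - unfold w. replace (m - S s)%nat with 0%nat by lia. replace (m - s)%nat with 0%nat by lia.
      simpl. pose proof (pow_le rho s (proj1 Hr)). nra. }
  destruct n as [|n]; [simpl; rewrite binom_n0; pose proof (Hw 0%nat); simpl; nra|].
  rewrite decomp_sum by lia. simpl pred. simpl binom_pred. rewrite Rmult_0_r, Rplus_0_l.
  cbn [sum_f_R0]. apply Rle_trans with (sum_f_R0 (fun s => w s * INR (binom m s)) n).
  - apply sum_Rle. intros s _. apply Hstep.
  - pose proof (Hw (S n)). pose proof (pos_INR (binom m (S n))).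
    assert (0 <= w (S n) * INR (binom m (S n))) by (apply Rmult_le_pos; auto). lra.
Qed.

Lemma ratio_mean_le_1 T rule rho n x : 0 <= rho <= 1/2 ->
  sum_var T n (fun z => prod1 n (weight T rho z) * ratio T (stop_index rule n z) z) x <= 1.
Proof.
  intros Hr. set (m := cnt T n). set (w := fun s => rho ^ s * (1 - rho) ^ (m - s)).
  assert (Hw : forall s, 0 <= w s) by (intros; apply Rmult_le_pos; apply pow_le; lra).
  assert (Hclass : forall s G, class_sum T n s (fun z => prod1 n (weight T rho z) * G z) x
                               = w s * class_sum T n s G x).
  { intros s G. rewrite <- class_sum_scal. apply class_sum_ext. intros z _ Hs.
    rewrite weight_on_class, Hs. reflexivity. }
  rewrite class_decomp, <- (total_mass T rho n x), class_decomp.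
  apply Rle_trans with (sum_f_R0 (fun s => w s * binom_pred m s) n).
  - apply sum_Rle. intros s _. rewrite Hclass.
    apply Rmult_le_compat_l; auto. apply stop_bound.
  - eapply Rle_trans; [apply (weighted_binom_shift rho m n Hr)|]. right. apply sum_eq.
    intros s _. rewrite (class_sum_ext _ _ _ _ (fun z => prod1 n (weight T rho z) * 1))
      by (intros; ring).
    rewrite Hclass, class_count. reflexivity.
Qed.

Definition fdp_rule (c : nat) (K : nat -> bool) (q : R) (k a b : nat) : bool :=
  K k && Rleb ((INR c + INR b) / INR (Nat.max a 1)) q.

Lemma Rleb_iff x y : Rleb x y = true <-> x <= y.
Proof. unfold Rleb. destruct (Rle_dec x y); split; auto; try discriminate; tauto. Qed.

Lemma scaled_frac_le v a d q : 0 <= v -> 0 < q -> 0 < a -> a <= q * d ->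
  v / d <= q * (v / a).
Proof.
  intros Hv Hq Ha Had. assert (0 < d) by nra.
  replace (q * (v / a)) with (v / (a / q)) by (field; lra).
  unfold Rdiv. apply Rmult_le_compat_l; auto. apply Rinv_le_contravar.
  - apply Rdiv_lt_0_compat; auto.
  - apply (Rmult_le_reg_l q); auto. field_simplify; lra.
Qed.

Section Pointwise.
Variables (T z : nat -> bool) (K : nat -> bool) (q : R) (k : nat).
Hypothesis Hq : 0 < q.

Let ones_le : (ones T z k <= cnt z k)%nat.
Proof. apply cnt_mono. intros l H. apply andb_true_iff in H. tauto. Qed.

Let zeros_le : (zeros T z k <= cnt (fun l => negb (z l)) k)%nat.
Proof. apply cnt_mono. intros l H. apply andb_true_iff in H. tauto. Qed.

Let trivial_bound d : ones T z k = 0%nat -> INR (ones T z k) / d <= q * ratio T k z.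
Proof.
  intros H0. rewrite H0. unfold Rdiv. rewrite Rmult_0_l.
  apply Rmult_le_pos; [lra|apply ratio_nonneg].
Qed.

Lemma khat_term_le_ratio :
  k = 0%nat \/ fdp_rule 0 K q k (cnt z k) (cnt (fun l => negb (z l)) k) = true ->
  INR (ones T z k) / (INR (cnt z k) + / q) <= q * ratio T k z.
Proof.
  intros [->|Hrule]; [apply trivial_bound; reflexivity|].
  apply andb_true_iff, proj2, Rleb_iff in Hrule. simpl INR in Hrule.
  rewrite Rplus_0_l in Hrule.
  destruct (Nat.eq_dec (cnt z k) 0) as [E|E]; [pose proof ones_le; apply trivial_bound; lia|].
  replace (Nat.max (cnt z k) 1) with (cnt z k) in Hrule by lia.
  assert (0 < INR (cnt z k)) by (apply lt_0_INR; lia).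
  assert (INR (zeros T z k) <= INR (cnt (fun l => negb (z l)) k)) by apply le_INR, zeros_le.
  assert (INR (cnt (fun l => negb (z l)) k) <= q * INR (cnt z k)).
  { apply (Rmult_le_reg_r (/ INR (cnt z k))); [apply Rinv_0_lt_compat; auto|].
    field_simplify; lra. }
  apply scaled_frac_le; try apply pos_INR; auto.
  - pose proof (pos_INR (zeros T z k)). lra.
  - rewrite Rmult_plus_distr_l, Rinv_r; lra.
Qed.

Lemma khat_plus_term_le_ratio :
  k = 0%nat \/ fdp_rule 1 K q k (cnt z k) (cnt (fun l => negb (z l)) k) = true ->
  INR (ones T z k) / INR (Nat.max (cnt z k) 1) <= q * ratio T k z.
Proof.
  intros [->|Hrule]; [apply trivial_bound; reflexivity|].
  apply andb_true_iff, proj2, Rleb_iff in Hrule. simpl INR in Hrule.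
  assert (1 <= INR (Nat.max (cnt z k) 1)) by (apply (le_INR 1); lia).
  assert (INR (zeros T z k) <= INR (cnt (fun l => negb (z l)) k)) by apply le_INR, zeros_le.
  assert (1 + INR (cnt (fun l => negb (z l)) k) <= q * INR (Nat.max (cnt z k) 1)).
  { apply (Rmult_le_reg_r (/ INR (Nat.max (cnt z k) 1))); [apply Rinv_0_lt_compat; lra|].
    field_simplify; lra. }
  apply scaled_frac_le; try apply pos_INR; auto.
  - pose proof (pos_INR (zeros T z k)). lra.
  - lra.
Qed.
End Pointwise.

Section ProbabilityFacts.
Variable Ps : ProbSpace.

Lemma ev_empty : ev Ps (fun _ => False).
Proof. apply (ev_ext Ps (fun _ => ~ True)); [tauto|]. apply ev_compl, ev_full. Qed.

Lemma ev_union A B : ev Ps A -> ev Ps B -> ev Ps (fun w => A w \/ B w).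
Proof.
  intros HA HB.
  apply (ev_ext Ps (fun w => exists n, (match n with O => A | _ => B end) w)).
  - intros w; split; [intros [[|n] H]; auto|].
    intros [H|H]; [exists 0%nat|exists 1%nat]; auto.
  - apply ev_cunion. intros [|n]; auto.
Qed.

Lemma ev_inter A B : ev Ps A -> ev Ps B -> ev Ps (fun w => A w /\ B w).
Proof.
  intros HA HB. apply (ev_ext Ps (fun w => ~ (~ A w \/ ~ B w))).
  - intros w. split; [intros H; split; apply NNPP; tauto|tauto].
  - apply ev_compl, ev_union; apply ev_compl; auto.
Qed.

Lemma Pr_empty : Pr Ps (fun _ => False) = 0.
Proof.
  pose proof (Pr_sigma_add Ps (fun _ _ => False) (fun _ => ev_empty)
    ltac:(intros; tauto)) as Hsum. cbv beta in Hsum.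
  rewrite (Pr_ext Ps (fun w => exists n : nat, False) (fun _ => False)) in Hsum
    by (intros; split; [intros [_ f]; auto|tauto]).
  set (c := Pr Ps (fun _ => False)) in *.
  destruct (Rle_lt_or_eq_dec 0 c (Pr_nonneg Ps _ ev_empty)) as [Hc|]; auto.
  exfalso. destruct (Hsum c Hc) as [n0 Hn0]. specialize (Hn0 (S n0) ltac:(lia)).
  rewrite sum_cte in Hn0. unfold R_dist in Hn0. rewrite !S_INR in Hn0.
  pose proof (pos_INR n0). rewrite Rabs_right in Hn0; nra.
Qed.

Lemma Pr_zero A : (forall w, ~ A w) -> Pr Ps A = 0.
Proof. intros. rewrite <- Pr_empty. apply Pr_ext. firstorder. Qed.

Lemma Pr_add2 A B : ev Ps A -> ev Ps B -> (forall w, A w -> B w -> False) ->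
  Pr Ps (fun w => A w \/ B w) = Pr Ps A + Pr Ps B.
Proof.
  intros HA HB Hd.
  set (An := fun n : nat => match n with O => A | 1%nat => B | _ => fun _ : Ps => False end).
  assert (Hev : forall n, ev Ps (An n)) by (intros [|[|n]]; simpl; auto using ev_empty).
  assert (Hdis : forall n m, n <> m -> forall w, An n w -> An m w -> False).
  { intros [|[|n]] [|[|m]] Hnm w; simpl; intros; try tauto; eauto. }
  pose proof (Pr_sigma_add Ps An Hev Hdis) as Hsum.
  rewrite (Pr_ext Ps (fun w => exists n, An n w) (fun w => A w \/ B w)) in Hsum.
  2:{ intros w. split; [intros [[|[|n]] H]; simpl in H; tauto|].
      intros [H|H]; [exists 0%nat|exists 1%nat]; auto. }
  apply (uniqueness_sum (fun n => Pr Ps (An n))); auto.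
  intros eps He. exists 1%nat. intros n Hn.
  replace (sum_f_R0 (fun n => Pr Ps (An n)) n) with (Pr Ps A + Pr Ps B).
  { unfold R_dist. rewrite Rminus_diag, Rabs_R0. auto. }
  destruct n as [|n]; [lia|]. clear Hn. induction n as [|n IH]; [reflexivity|].
  cbn [sum_f_R0]. cbn [sum_f_R0] in IH. rewrite <- IH. simpl. rewrite Pr_empty. ring.
Qed.

Lemma Pr_split A B : ev Ps A -> ev Ps B ->
  Pr Ps A = Pr Ps (fun w => A w /\ B w) + Pr Ps (fun w => A w /\ ~ B w).
Proof.
  intros HA HB. rewrite <- Pr_add2; try tauto.
  - apply Pr_ext. intros w. split; [|tauto]. intros H. destruct (classic (B w)); tauto.
  - apply ev_inter; auto.
  - apply ev_inter; auto. apply ev_compl; auto.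
Qed.
End ProbabilityFacts.

Definition local (n : nat) (P : (nat -> bool) -> Prop) : Prop :=
  forall x y, (forall l, (1 <= l <= n)%nat -> x l = y l) -> P x -> P y.

Lemma local_upd n P b : local (S n) P -> local n (fun x => P (upd x (S n) b)).
Proof.
  intros HP x y Hxy. apply HP. intros l Hl. unfold upd.
  destruct (Nat.eqb_spec l (S n)); auto. apply Hxy. lia.
Qed.

Lemma upd_id x k b : x k = b -> upd x k b = x.
Proof. intros H. extensionality l. unfold upd. destruct (Nat.eqb_spec l k); subst; auto. Qed.

Section IndicatorVector.
Variables (Ps : ProbSpace) (N : nat) (p : nat -> Ps -> R).
Hypothesis Hmeas : forall l u, ev Ps (fun w => p l w <= u).

Definition X (w : Ps) : nat -> bool := small Ps p w.

Lemma X_true w l : X w l = true <-> p l w <= 1/2.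
Proof. apply Rleb_iff. Qed.

Lemma ev_X l : ev Ps (fun w => X w l = true).
Proof. apply (ev_ext Ps (fun w => p l w <= 1/2)); [|auto]. intros; rewrite X_true; tauto. Qed.

Lemma ev_local n P : local n P -> ev Ps (fun w => P (X w)).
Proof.
  revert P; induction n as [|n IH]; intros P HP.
  - destruct (classic (P (fun _ => false))) as [H|H].
    + apply (ev_ext Ps (fun _ => True)); [|apply ev_full].
      intros w; split; auto. intros _. eapply HP; [|exact H]. intros; lia.
    + apply (ev_ext Ps (fun _ => False)); [|apply ev_empty].
      intros w; split; [tauto|]. intros H'. apply H. eapply HP; [|exact H']. intros; lia.
  - apply (ev_ext Ps (fun w => (X w (S n) = true /\ P (upd (X w) (S n) true))
                           \/ (~ X w (S n) = true /\ P (upd (X w) (S n) false)))).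
    + intros w. destruct (X w (S n)) eqn:Hb; rewrite (upd_id _ _ _ Hb);
        intuition congruence.
    + apply ev_union; apply ev_inter; auto using ev_X, ev_compl;
        apply (IH (fun x => P (upd x (S n) _))), local_upd; auto.
Qed.

(** [agree_above n x w]: X(w) coincides with [x] at the coordinates in
    {n+1..N}.  For n = 0 this is the elementary event {X = x on {1..N}}. *)
Definition agree_above (n : nat) (x : nat -> bool) (w : Ps) : Prop :=
  forall l, (n < l <= N)%nat -> X w l = x l.

Lemma ev_agree_above n x : ev Ps (agree_above n x).
Proof.
  apply (ev_local N (fun y => forall l, (n < l <= N)%nat -> y l = x l)).
  intros y y' Hyy H l Hl. rewrite <- Hyy by lia. auto.
Qed.

Lemma total_probability E n x : ev Ps E -> (n <= N)%nat ->
  Pr Ps (fun w => E w /\ agree_above n x w)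
  = sum_var (fun _ => true) n (fun z => Pr Ps (fun w => E w /\ agree_above 0 z w)) x.
Proof.
  intros HE. revert x; induction n as [|n IH]; intros x Hn; [reflexivity|].
  cbn [sum_var]. rewrite <- !IH by lia.
  rewrite (Pr_split Ps _ (fun w => X w (S n) = true));
    [|apply ev_inter, ev_agree_above; auto|apply ev_X].
  unfold agree_above, upd.
  f_equal; apply Pr_ext; intros w; split.
  - intros [[HEw H] Hx]. split; auto. intros l Hl.
    destruct (Nat.eqb_spec l (S n)); subst; auto. apply H. lia.
  - intros [HEw H]. specialize (H (S n) ltac:(lia)) as Hx. rewrite Nat.eqb_refl in Hx.
    repeat split; auto. intros l Hl. specialize (H l ltac:(lia)).
    destruct (Nat.eqb_spec l (S n)); subst; auto; lia.
  - intros [[HEw H] Hx]. split; auto. intros l Hl.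
    destruct (Nat.eqb_spec l (S n)); subst; [apply not_true_is_false; auto|]. apply H. lia.
  - intros [HEw H]. specialize (H (S n) ltac:(lia)) as Hx. rewrite Nat.eqb_refl in Hx.
    repeat split; auto; [|congruence]. intros l Hl. specialize (H l ltac:(lia)).
    destruct (Nat.eqb_spec l (S n)); subst; auto; lia.
Qed.

Lemma Pr_as_config_sum (b : (nat -> bool) -> bool) x :
  local N (fun y => b y = true) ->
  Pr Ps (fun w => b (X w) = true)
  = sum_var (fun _ => true) N (fun z => (if b z then 1 else 0) * Pr Ps (agree_above 0 z)) x.
Proof.
  intros Hb.
  rewrite (Pr_ext Ps _ (fun w => b (X w) = true /\ agree_above N x w))
    by (intros w; unfold agree_above; split; [split; auto; intros; lia|tauto]).
  rewrite total_probability by (auto; exact (ev_local N _ Hb)).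
  apply sum_var_ext. intros z _. destruct (b z) eqn:Hbz.
  - rewrite Rmult_1_l. apply Pr_ext. intros w. split; [tauto|].
    intros H. split; auto. apply (Hb z); [intros l Hl; symmetry; apply H; lia|exact Hbz].
  - rewrite Rmult_0_l. apply Pr_zero. intros w [H1 H2].
    enough (b z = true) by congruence. apply (Hb (X w)); [intros l Hl; apply H2; lia|exact H1].
Qed.

Lemma expect2_as_config_sum f (V Rr : (nat -> bool) -> nat) x :
  (forall y y', (forall l, (1 <= l <= N)%nat -> y l = y' l) -> V y = V y' /\ Rr y = Rr y') ->
  (forall y, V y <= N /\ Rr y <= N)%nat ->
  expect2 Ps N f (fun w => V (X w)) (fun w => Rr (X w))
  = sum_var (fun _ => true) N (fun z => f (V z) (Rr z) * Pr Ps (agree_above 0 z)) x.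
Proof.
  intros Hloc Hbd. unfold expect2.
  transitivity (sum_var (fun _ => true) N (fun z =>
    sum_f_R0 (fun v => sum_f_R0 (fun r =>
      f v r * ((if Nat.eqb (V z) v && Nat.eqb (Rr z) r then 1 else 0)
               * Pr Ps (agree_above 0 z))) N) N) x).
  - rewrite sum_var_sum. apply sum_eq; intros v _.
    rewrite sum_var_sum. apply sum_eq; intros r _.
    rewrite sum_var_scal, <- Pr_as_config_sum.
    + f_equal. apply Pr_ext. intros w. rewrite andb_true_iff, !Nat.eqb_eq. tauto.
    + intros y y' Hyy'. destruct (Hloc y y' Hyy') as [-> ->]. auto.
  - apply sum_var_ext. intros z _. destruct (Hbd z) as [HV HR].
    rewrite (sum_eq _ (fun v => if Nat.eqb (V z) v
                                then f v (Rr z) * Pr Ps (agree_above 0 z) else 0)).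
    + apply sum_indicator; auto.
    + intros v _. destruct (Nat.eqb (V z) v); simpl.
      * rewrite (sum_eq _ (fun r => if Nat.eqb (Rr z) r
                                    then f v r * Pr Ps (agree_above 0 z) else 0)).
        -- apply sum_indicator; auto.
        -- intros r _. destruct (Nat.eqb (Rr z) r); ring.
      * rewrite (sum_eq _ (fun _ => 0)), sum_cte by (intros; ring). ring.
Qed.
End IndicatorVector.

Section Factorization.
Variables (Ps : ProbSpace) (N : nat) (p : nat -> Ps -> R) (null : nat -> bool) (rho : R).
Hypothesis Hmeas : forall l u, ev Ps (fun w => p l w <= u).
Hypothesis Hind : nulls_indep Ps N null p.
Hypothesis Hrho : forall l, (1 <= l <= N)%nat -> null l = true ->
  Pr Ps (fun w => p l w <= 1/2) = rho.

(** For n = 0 this is a joint CDF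
    event of the p-values; for n = N it fixes X = z on [A]. *)
Definition pattern (A : nat -> bool) (n : nat) (z : nat -> bool) (w : Ps) : Prop :=
  forall l, (1 <= l <= N)%nat -> A l = true ->
    (z l = true -> X Ps p w l = true) /\ ((l <= n)%nat -> z l = false -> X Ps p w l = false).

Definition nonnull (l : nat) : bool := negb (null l).

Definition partial_weight (n : nat) (z : nat -> bool) (l : nat) : R :=
  if null l then (if z l then rho else if Nat.leb l n then 1 - rho else 1) else 1.

Lemma ev_pattern A n z : ev Ps (pattern A n z).
Proof.
  apply (ev_local Ps p Hmeas N (fun y => forall l, (1 <= l <= N)%nat -> A l = true ->
    (z l = true -> y l = true) /\ ((l <= n)%nat -> z l = false -> y l = false))).
  intros y y' Hyy H l Hl HA. rewrite <- Hyy by lia. auto.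
Qed.

Lemma pattern_full A z w :
  pattern A N z w <-> forall l, (1 <= l <= N)%nat -> A l = true -> X Ps p w l = z l.
Proof.
  split; intros H l Hl HA; [|rewrite H by auto; split; auto].
  destruct (H l Hl HA) as [H1 H2]. destruct (z l); auto. apply H2; auto; lia.
Qed.

Lemma pattern_irrelevant A n z w : A (S n) = false \/ z (S n) = true ->
  pattern A (S n) z w <-> pattern A n z w.
Proof.
  intros Hn. split; intros H l Hl HA; destruct (H l Hl HA) as [H1 H2]; split; auto;
    intros Hle Hzl; apply H2; auto.
  destruct (Nat.eq_dec l (S n)); subst; [destruct Hn; congruence|lia].
Qed.

Lemma pattern_upd_outside A n z b w : A (S n) = false ->
  pattern A n (upd z (S n) b) w <-> pattern A n z w.
Proof.
  intros HA. unfold pattern, upd.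
  split; intros H l Hl HAl; specialize (H l Hl HAl);
    destruct (Nat.eqb_spec l (S n)); subst; congruence || auto.
Qed.

Lemma pattern_split A n z : (S n <= N)%nat -> A (S n) = true -> z (S n) = false ->
  Pr Ps (pattern A n z)
  = Pr Ps (pattern A n (upd z (S n) true)) + Pr Ps (pattern A (S n) z).
Proof.
  intros Hn HA Hz.
  rewrite (Pr_split Ps _ (fun w => X Ps p w (S n) = true));
    [|apply ev_pattern|apply ev_X; auto].
  unfold pattern, upd. f_equal; apply Pr_ext; intros w; split.
  - intros [H Hx] l Hl HAl. destruct (Nat.eqb_spec l (S n)); subst; [split; auto; lia|auto].
  - intros H. pose proof (H (S n) ltac:(lia) HA) as HSn. rewrite Nat.eqb_refl in HSn.
    split; [|tauto]. intros l Hl HAl. specialize (H l Hl HAl).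
    destruct (Nat.eqb_spec l (S n)); subst; [split; intros; [congruence|lia]|auto].
  - intros [H Hx] l Hl HAl. destruct (H l Hl HAl) as [H1 H2]. split; auto.
    intros Hle Hzl. destruct (Nat.eq_dec l (S n)); subst; [apply not_true_is_false; auto|].
    apply H2; auto; lia.
  - intros H. pose proof (H (S n) ltac:(lia) HA) as [_ HSn]. split.
    + intros l Hl HAl. destruct (H l Hl HAl) as [H1 H2]. split; auto.
    + rewrite HSn; auto.
Qed.

(** n = 0: the independence hypothesis applied to u = 1/2. *)
Lemma pattern_base z :
  Pr Ps (pattern (fun _ => true) 0 z)
  = prod1 N (partial_weight 0 z) * Pr Ps (pattern nonnull 0 z).
Proof.
  assert (Hcdf : forall A w, pattern A 0 z w <->
    forall l, (1 <= l <= N)%nat -> z l = true -> A l = true -> p l w <= 1/2).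
  { intros A w. unfold pattern. split.
    - intros H l Hl Hz HA. apply X_true. apply (H l Hl HA). auto.
    - intros H l Hl HA. split; [|lia]. intros Hz. apply X_true. auto. }
  rewrite (Pr_ext Ps _ _ (Hcdf _)), (Pr_ext Ps _ _ (Hcdf _)).
  rewrite (Pr_ext Ps _ (fun w => forall l, (1 <= l <= N)%nat -> z l = true -> p l w <= 1/2))
    by (intros w; split; intros H l Hl Hz; auto).
  rewrite (Pr_ext Ps (fun w => forall l, _ -> _ -> nonnull l = true -> _)
    (fun w => forall l, (1 <= l <= N)%nat -> z l = true -> null l = false -> p l w <= 1/2))
    by (intros w; unfold nonnull; split; intros H l Hl Hz Hn; apply H; auto;
        [rewrite Hn|apply negb_true_iff in Hn]; auto).
  rewrite (Hind z (fun _ => 1/2)). f_equal. apply prod1_ext. intros l Hl.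
  unfold partial_weight. destruct (z l), (null l) eqn:Hn; simpl; auto.
  replace (Nat.leb l 0) with false by (symmetry; apply Nat.leb_gt; lia). reflexivity.
Qed.

Lemma factorization n : (n <= N)%nat -> forall z,
  Pr Ps (pattern (fun _ => true) n z)
  = prod1 N (partial_weight n z) * Pr Ps (pattern nonnull n z).
Proof.
  induction n as [|n IH]; intros Hn z; [apply pattern_base|].
  assert (Hle : forall l, l <> S n -> Nat.leb l (S n) = Nat.leb l n).
  { intros l Hl. destruct (Nat.leb_spec l n), (Nat.leb_spec l (S n)); auto; lia. }
  assert (HSn : Nat.leb (S n) n = false) by (apply Nat.leb_gt; lia).
  destruct (z (S n)) eqn:Hz.
  - rewrite !(Pr_ext Ps _ _ (fun w => pattern_irrelevant _ n z w (or_intror Hz))), IH by lia.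
    f_equal. apply prod1_ext. intros l _. unfold partial_weight.
    destruct (Nat.eq_dec l (S n)); subst; [rewrite Hz; reflexivity|rewrite Hle; auto].
  - set (z' := upd z (S n) true).
    assert (Hz' : forall l, l <> S n -> z' l = z l).
    { intros l Hl. unfold z', upd. rewrite (proj2 (Nat.eqb_neq l (S n)) Hl). auto. }
    assert (Hz'S : z' (S n) = true) by (unfold z', upd; rewrite Nat.eqb_refl; auto).
    pose proof (pattern_split (fun _ => true) n z ltac:(lia) eq_refl Hz) as Hall.
    rewrite !IH in Hall by lia.
    destruct (null (S n)) eqn:Hnull.
    + (* null coordinate: it contributes a factor rho or 1 - rho *)
      assert (Hnn : nonnull (S n) = false) by (unfold nonnull; rewrite Hnull; auto).
      rewrite (Pr_ext Ps _ _ (fun w => pattern_irrelevant _ n z w (or_introl Hnn))).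
      rewrite (Pr_ext Ps _ _ (fun w => pattern_upd_outside _ n z true w Hnn)) in Hall.
      fold z' in Hall.
      rewrite (prod1_update N (partial_weight n z) (partial_weight n z') (S n) rho)
        in Hall; try lia.
      2:{ intros l Hl. unfold partial_weight. rewrite Hz'; auto. }
      2:{ unfold partial_weight. rewrite Hnull, Hz, Hz'S, HSn. ring. }
      rewrite (prod1_update N (partial_weight n z) (partial_weight (S n) z) (S n) (1 - rho));
        try lia.
      * lra.
      * intros l Hl. unfold partial_weight. rewrite Hle; auto.
      * unfold partial_weight. rewrite Hnull, Hz, Nat.leb_refl, HSn. ring.
    + (* non-null coordinate: it is split in the same way on both sides *)
      assert (Hnn : nonnull (S n) = true) by (unfold nonnull; rewrite Hnull; auto).
      pose proof (pattern_split nonnull n z ltac:(lia) Hnn Hz) as Hsplit.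
      fold z' in Hall, Hsplit.
      assert (Hw : prod1 N (partial_weight n z') = prod1 N (partial_weight n z)).
      { apply prod1_ext. intros l _. unfold partial_weight.
        destruct (Nat.eq_dec l (S n)); subst; [rewrite Hnull; auto|rewrite Hz'; auto]. }
      assert (Hw' : prod1 N (partial_weight (S n) z) = prod1 N (partial_weight n z)).
      { apply prod1_ext. intros l _. unfold partial_weight.
        destruct (Nat.eq_dec l (S n)); subst; [rewrite Hnull; auto|rewrite Hle; auto]. }
      rewrite Hw in Hall. rewrite Hw'. nra.
Qed.

Definition agree_nonnull (z : nat -> bool) (w : Ps) : Prop :=
  forall l, (1 <= l <= N)%nat -> null l = false -> X Ps p w l = z l.

Lemma ev_agree_nonnull z : ev Ps (agree_nonnull z).
Proof.
  apply (ev_local Ps p Hmeas N (fun y => forall l, (1 <= l <= N)%nat -> null l = false -> y l = z l)).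
  intros y y' Hyy H l Hl Hn. rewrite <- Hyy by lia. auto.
Qed.

Lemma config_law z :
  Pr Ps (agree_above Ps N p 0 z)
  = prod1 N (weight null rho z) * Pr Ps (agree_nonnull z).
Proof.
  rewrite (Pr_ext Ps _ (pattern (fun _ => true) N z)).
  2:{ intros w. rewrite pattern_full. unfold agree_above.
      split; intros H l Hl; [|apply H; auto; lia]. intros _. apply H. lia. }
  rewrite (Pr_ext Ps (agree_nonnull z) (pattern nonnull N z)).
  2:{ intros w. rewrite pattern_full. unfold agree_nonnull, nonnull.
      split; intros H l Hl Hn; apply H; auto; [apply negb_true_iff|rewrite Hn]; auto. }
  rewrite factorization by lia. f_equal. apply prod1_ext. intros l Hl.
  unfold partial_weight, weight. destruct (null l), (z l); auto.
  rewrite (proj2 (Nat.leb_le l N)) by lia. reflexivity.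
Qed.
End Factorization.

Section Assembly.
Variables (Ps : ProbSpace) (N : nat) (p : nat -> Ps -> R) (null : nat -> bool)
  (q : R) (K : nat -> bool).
Hypothesis Hmeas : forall l u, ev Ps (fun w => p l w <= u).
Hypothesis Hind : nulls_indep Ps N null p.
Hypothesis Hid : nulls_ident Ps N null p.
Hypothesis Hsu : nulls_superunif Ps N null p.
Hypothesis Hq : 0 < q.

Lemma common_small_prob : exists rho, 0 <= rho <= 1/2 /\
  forall l, (1 <= l <= N)%nat -> null l = true -> Pr Ps (fun w => p l w <= 1/2) = rho.
Proof.
  destruct (classic (exists l0, (1 <= l0 <= N)%nat /\ null l0 = true))
    as [[l0 [Hl0 Hn0]]|Hnone].
  - exists (Pr Ps (fun w => p l0 w <= 1/2)). split.
    + split; [apply Pr_nonneg, Hmeas|]. apply Hsu; auto; lra.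
    + intros l Hl Hn. apply Hid; auto.
  - exists 0. split; [lra|]. intros l Hl Hn. exfalso. eauto.
Qed.

Section WithRho.
Variable rho : R.
Hypothesis Hrho : forall l, (1 <= l <= N)%nat -> null l = true ->
  Pr Ps (fun w => p l w <= 1/2) = rho.

Lemma null_coords_sum G y :
  sum_var null N (fun z => G z * Pr Ps (agree_above Ps N p 0 z)) y
  = Pr Ps (agree_nonnull Ps N p null y)
    * sum_var null N (fun z => prod1 N (weight null rho z) * G z) y.
Proof.
  rewrite <- sum_var_scal. apply sum_var_ext. intros z Hz.
  rewrite (config_law Ps N p null rho Hmeas Hind Hrho).
  rewrite (Pr_ext Ps (agree_nonnull Ps N p null z) (agree_nonnull Ps N p null y)).
  - ring.
  - intros w. unfold agree_nonnull.
    split; intros H l Hl Hn; rewrite H by auto; [|symmetry];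
      apply (variant_eq null N y z l Hz); auto.
Qed.

Lemma nonnull_mass x : sum_var (nonnull null) N (fun y => Pr Ps (agree_nonnull Ps N p null y)) x = 1.
Proof.
  transitivity (Pr Ps (fun w => (fun _ : nat -> bool => true) (X Ps p w) = true)).
  - rewrite (Pr_as_config_sum Ps N p Hmeas (fun _ => true) x) by (intros ? ? _ _; auto).
    rewrite (sum_var_fubini null). apply sum_var_ext. intros y _.
    rewrite null_coords_sum.
    rewrite (sum_var_ext _ _ _ (fun z => prod1 N (weight null rho z))) by (intros; ring).
    rewrite total_mass. ring.
  - rewrite <- (Pr_full Ps). apply Pr_ext. tauto.
Qed.
End WithRho.

Definition khat_of (c : nat) (z : nat -> bool) : nat := stop_index (fdp_rule c K q) N z.

Lemma khat_local c z z' : (forall l, (1 <= l <= N)%nat -> z l = z' l) ->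
  ones null z (khat_of c z) = ones null z' (khat_of c z')
  /\ cnt z (khat_of c z) = cnt z' (khat_of c z').
Proof.
  intros Hzz. assert (Hk : khat_of c z = khat_of c z').
  { apply max_upto_ext. intros k Hk.
    rewrite (cnt_ext z z' k), (cnt_ext (fun l => negb (z l)) (fun l => negb (z' l)) k);
      auto; intros l Hl; rewrite Hzz; auto; lia. }
  pose proof (max_upto_le (fun k => fdp_rule c K q k (cnt z' k)
                (cnt (fun l => negb (z' l)) k)) N).
  rewrite Hk. unfold ones. split; apply cnt_ext; intros l Hl; rewrite Hzz; auto;
    unfold khat_of, stop_index in *; lia.
Qed.

Lemma expectation_le_q c (f : nat -> nat -> R) :
  (forall z, f (ones null z (khat_of c z)) (cnt z (khat_of c z))
             <= q * ratio null (khat_of c z) z) ->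
  expect2 Ps N f (fun w => ones null (X Ps p w) (khat_of c (X Ps p w)))
                 (fun w => cnt (X Ps p w) (khat_of c (X Ps p w))) <= q.
Proof.
  intros Hf. destruct common_small_prob as [rho [Hr Hrho]].
  set (x0 := fun _ : nat => false).
  rewrite (expect2_as_config_sum Ps N p Hmeas f (fun z => ones null z (khat_of c z))
            (fun z => cnt z (khat_of c z)) x0).
  2:{ apply khat_local. }
  2:{ intros y. pose proof (max_upto_le (fun k => fdp_rule c K q k (cnt y k)
        (cnt (fun l => negb (y l)) k)) N).
      unfold ones, khat_of, stop_index in *.
      split; (eapply Nat.le_trans; [apply cnt_le|]); auto. }
  rewrite (sum_var_fubini null), <- (Rmult_1_r q), <- (nonnull_mass rho Hrho x0).
  rewrite <- sum_var_scal. apply sum_var_le. intros y _.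
  rewrite (null_coords_sum rho Hrho), (Rmult_comm q).
  apply Rmult_le_compat_l; [apply Pr_nonneg, ev_agree_nonnull; auto|].
  apply Rle_trans with (sum_var null N (fun z =>
    q * (prod1 N (weight null rho z) * ratio null (stop_index (fdp_rule c K q) N z) z)) y).
  - apply sum_var_le. intros z _.
    assert (0 <= prod1 N (weight null rho z))
      by (apply prod1_nonneg; intros l; unfold weight; destruct (null l), (z l); lra).
    specialize (Hf z). unfold khat_of in *. nra.
  - rewrite sum_var_scal. pose proof (ratio_mean_le_1 null (fdp_rule c K q) rho N y Hr). nra.
Qed.
End Assembly.

Theorem lemma4 (Ps : ProbSpace) (N : nat) (p : nat -> Ps -> R)
  (null : nat -> bool) (q : R) (K : nat -> bool)
  (Hmeas : forall l u, ev Ps (fun w => p l w <= u))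
  (Hind : nulls_indep Ps N null p)
  (Hid : nulls_ident Ps N null p)
  (Hsu : nulls_superunif Ps N null p)
  (Hq : 0 < q <= 1)
  (HK : forall k, K k = true -> (1 <= k <= N)%nat) :
  expect2 Ps N (fun v r => INR v / (INR r + / q))
    (fun w => Vcount _ p null (khat_gen _ p 0 N K q w) w)
    (fun w => Rcount _ p (khat_gen _ p 0 N K q w) w) <= q
  /\
  expect2 Ps N (fun v r => INR v / INR (Nat.max r 1))
    (fun w => Vcount _ p null (khat_gen _ p 1 N K q w) w)
    (fun w => Rcount _ p (khat_gen _ p 1 N K q w) w) <= q.
Proof.
  destruct Hq as [Hq0 _].
  split.
  - apply (expectation_le_q Ps N p null q K Hmeas Hind Hid Hsu Hq0 0).
    intros z. apply (khat_term_le_ratio null z K); auto. apply max_upto_spec.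
  - apply (expectation_le_q Ps N p null q K Hmeas Hind Hid Hsu Hq0 1).
    intros z. apply (khat_plus_term_le_ratio null z K); auto. apply max_upto_spec.
Qed.
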